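(* Let $k_{11}>0$, $k_{22}>0$, $\mathbf{K}=\mathrm{diag}(k_{11},k_{22})$, $\mathbf{N}=\begin{pmatrix}0&\nu\\-\nu&0\end{pmatrix}$ with $\nu\in\mathbb{R}$, and let $\mathbf{D}'=\begin{pmatrix} d'_{11}&d'_{12}\\ d'_{12}&d'_{22}\end{pmatrix}$ be real symmetric positive definite. For $\varepsilon>0$ let $\nu^2_{\varepsilon}$ denote the supremum of those $\nu^2$ for which all roots of $\det(\lambda^2\mathbf{I}+\varepsilon\lambda\mathbf{D}'+\mathbf{K}+\mathbf{N})=0$ have negative real parts. Then: (i) $\lim_{\varepsilon\to0^+}\nu^2_\varepsilon=\nu_{cr}^2:=\dfrac{(k_{11}-k_{22})^2}{4}-\dfrac{(d'_{11}-d'_{22})^2(k_{11}-k_{22})^2}{4(d'_{11}+d'_{22})^2}$; (ii) in the undamped case, all roots of $\det(\lambda^2\mathbf{I}+\mathbf{K}+\mathbf{N})=0$ are purely imaginary and simple if and only if $\nu^2<\nu_0^2:=\dfrac{(k_{11}-k_{22})^2}{4}=\left(\dfrac{\mathrm{tr}\,\mathbf{K}}{2}\right)^2-\det\mathbf{K}$; (iii) $\nu_0^2-\nu_{cr}^2=\left[\dfrac{2\,\mathrm{tr}(\mathbf{K}\mathbf{D}')-\mathrm{tr}\,\mathbf{K}\,\mathrm{tr}\,\mathbf{D}'}{2\,\mathrm{tr}\,\mathbf{D}'}\right]^2\ge0$.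
   Context: $\mathbf{I}$ denotes the $2\times2$ identity matrix; $\mathrm{tr}$ denotes the trace. *)

From Stdlib Require Import Reals List.
Import ListNotations.
Open Scope R_scope.

Record Cplx := mkC { re : R; im : R }.
Definition C0 : Cplx := mkC 0 0.
Definition Cofr (a : R) : Cplx := mkC a 0.
Definition Cadd (z w : Cplx) : Cplx := mkC (re z + re w) (im z + im w).
Definition Cmul (z w : Cplx) : Cplx :=
  mkC (re z * re w - im z * im w) (re z * im w + im z * re w).

(* Real-coefficient polynomials: [a0; a1; ...; an] = a0 + a1 X + ... + an X^n *)
Definition poly := list R.

Fixpoint padd (p q : poly) : poly :=
  match p, q with
  | [], _ => q
  | _, [] => p
  | a :: p', b :: q' => (a + b) :: padd p' q'
  end.
Definition pscale (c : R) (p : poly) : poly := map (fun a => c * a) p.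
Definition psub (p q : poly) : poly := padd p (pscale (-1) q).
Fixpoint pmul (p q : poly) : poly :=
  match p with
  | [] => []
  | a :: p' => padd (pscale a q) (0 :: pmul p' q)
  end.
Fixpoint pderiv_aux (n : nat) (p : poly) : poly :=
  match p with
  | [] => []
  | a :: p' => (INR n * a) :: pderiv_aux (S n) p'
  end.
Definition pderiv (p : poly) : poly :=
  match p with [] => [] | _ :: p' => pderiv_aux 1 p' end.
Definition peval (p : poly) (z : Cplx) : Cplx :=
  fold_right (fun a acc => Cadd (Cofr a) (Cmul z acc)) C0 p.

Record Mat2 := mkM { m11 : R; m12 : R; m21 : R; m22 : R }.
Definition I2 : Mat2 := mkM 1 0 0 1.
Definition Madd (A B : Mat2) : Mat2 :=
  mkM (m11 A + m11 B) (m12 A + m12 B) (m21 A + m21 B) (m22 A + m22 B).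
Definition Mscale (c : R) (A : Mat2) : Mat2 :=
  mkM (c * m11 A) (c * m12 A) (c * m21 A) (c * m22 A).
Definition Mmul (A B : Mat2) : Mat2 :=
  mkM (m11 A * m11 B + m12 A * m21 B) (m11 A * m12 B + m12 A * m22 B)
      (m21 A * m11 B + m22 A * m21 B) (m21 A * m12 B + m22 A * m22 B).
Definition tr2 (A : Mat2) : R := m11 A + m22 A.
Definition det2 (A : Mat2) : R := m11 A * m22 A - m12 A * m21 A.

Definition sym_pos_def (A : Mat2) : Prop :=
  m12 A = m21 A /\
  forall x y : R, (x <> 0 \/ y <> 0) ->
    0 < x * (m11 A * x + m12 A * y) + y * (m21 A * x + m22 A * y).

(* det(λ^2 M2 + λ M1 + M0) as a polynomial in λ *)
Definition qentry (a2 a1 a0 : R) : poly := [a0; a1; a2].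
Definition det_quad (M2 M1 M0 : Mat2) : poly :=
  psub (pmul (qentry (m11 M2) (m11 M1) (m11 M0)) (qentry (m22 M2) (m22 M1) (m22 M0)))
       (pmul (qentry (m12 M2) (m12 M1) (m12 M0)) (qentry (m21 M2) (m21 M1) (m21 M0))).

Definition Kmat (k11 k22 : R) : Mat2 := mkM k11 0 0 k22.
Definition Nmat (nu : R) : Mat2 := mkM 0 nu (- nu) 0.

Definition charpoly (eps : R) (D K : Mat2) (nu : R) : poly :=
  det_quad I2 (Mscale eps D) (Madd K (Nmat nu)).

Definition all_roots_stable (p : poly) : Prop :=
  forall z : Cplx, peval p z = C0 -> re z < 0.

Definition stab_set (eps : R) (D K : Mat2) : R -> Prop :=
  fun s => exists nu : R, s = nu ^ 2 /\ all_roots_stable (charpoly eps D K nu).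

(* A real monic quartic splits into two real monic quadratic factors, so its
   roots are stable iff both factors have positive coefficients; for
   (X^2 + pX + q)(X^2 + rX + s) this is the Routh-Hurwitz condition
   a1 a2 a3 > a1^2 + a3^2 a0, because
   a1 a2 a3 - a1^2 - a3^2 a0 = p r ((q - s)^2 + (p + r)(p s + q r)).
   For the damped characteristic polynomial the Hurwitz expression equals
   eps^2 tr(D')^2 (B(eps) - nu^2) with B(eps) = nu_cr^2 + eps^2 c, c > 0,
   so nu^2_eps = B(eps) -> nu_cr^2.  Without damping the polynomial is the
   biquadratic X^4 + tr K X^2 + det(K + N), whose roots are simple and purely
   imaginary iff X^2 has two distinct negative values, i.e. iff its
   discriminant (k11 - k22)^2 - 4 nu^2 is positive. *)
From Pilot Require Import Defs.
From Stdlib Require Import Reals List Lra Psatz.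
Import ListNotations.
Open Scope R_scope.

Lemma Cmul_eq0 (u w : Cplx) : Cmul u w = C0 -> u = C0 \/ w = C0.
Proof.
  destruct u as [a b], w as [c d]; unfold Cmul, C0; simpl.
  intro H; injection H as H1 H2.
  assert (E : (a * a + b * b) * (c * c + d * d) = 0) by nra.
  apply Rmult_integral in E; destruct E as [E | E].
  - left; f_equal; nra.
  - right; f_equal; nra.
Qed.

Definition quadC (p q : R) (z : Cplx) : Cplx :=
  mkC (re z * re z - im z * im z + p * re z + q) (2 * re z * im z + p * im z).

Lemma quadC_root_re_lt0 (p q : R) (z : Cplx) :
  0 < p -> 0 < q -> quadC p q z = C0 -> re z < 0.
Proof.
  destruct z as [x y]; unfold quadC, C0; simpl.
  intros Hp Hq H; injection H as H1 H2.
  assert (E : y * (2 * x + p) = 0) by lra.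
  apply Rmult_integral in E; destruct E as [E | E].
  - subst y; nra.
  - lra.
Qed.

Lemma quadC_root_re_ge0 (p q : R) : p <= 0 \/ q <= 0 ->
  exists z, quadC p q z = C0 /\ 0 <= re z /\ (p < 0 -> 0 < re z).
Proof.
  intro H.
  destruct (Rle_dec 0 (p ^ 2 - 4 * q)) as [Hdisc | Hdisc].
  - pose proof (sqrt_sqrt _ Hdisc); pose proof (sqrt_pos (p ^ 2 - 4 * q)).
    set (s := sqrt (p ^ 2 - 4 * q)) in *; clearbody s.
    assert (p <= s) by (destruct H; nra).
    exists (mkC ((- p + s) / 2) 0); unfold quadC, C0; simpl.
    split; [f_equal; nra | split; intros; lra].
  - assert (Hdisc' : 0 <= - (p ^ 2 - 4 * q)) by lra.
    pose proof (sqrt_sqrt _ Hdisc').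
    set (s := sqrt (- (p ^ 2 - 4 * q))) in *; clearbody s.
    exists (mkC (- p / 2) (s / 2)); unfold quadC, C0; simpl.
    assert (p <= 0) by (destruct H; nra).
    split; [f_equal; nra | split; intros; lra].
Qed.

Definition quad_prod (p q r s : R) : Defs.poly :=
  [q * s; p * s + q * r; q + s + p * r; p + r; 1].

Lemma peval_quad_prod (p q r s : R) (z : Cplx) :
  peval (quad_prod p q r s) z = Cmul (quadC p q z) (quadC r s z).
Proof.
  destruct z as [x y]; unfold peval, quadC, Cmul, Cadd, Cofr, C0; simpl.
  f_equal; ring.
Qed.

Lemma quad_prod_root (p q r s : R) (z : Cplx) :
  quadC p q z = C0 \/ quadC r s z = C0 -> peval (quad_prod p q r s) z = C0.
Proof.
  rewrite peval_quad_prod.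
  intros [-> | ->]; [destruct (quadC r s z) | destruct (quadC p q z)];
    unfold Cmul, C0; simpl; f_equal; ring.
Qed.

(* Depressed quartic X^4 + cX^2 + dX + e = (X^2 + PX + Q)(X^2 - PX + S).  For
   d <> 0 the square X = P^2 is a positive root of the resolvent cubic
   X (c + X)^2 - d^2 - 4 e X, which is negative at 0 and positive at M. *)
Lemma depressed_quartic_factor (c d e : R) :
  exists P Q S, Q + S - P ^ 2 = c /\ P * (S - Q) = d /\ Q * S = e.
Proof.
  destruct (Req_dec d 0) as [Hd | Hd].
  - subst d; destruct (Rle_dec 0 (c ^ 2 - 4 * e)) as [H | H].
    + exists 0, ((c - sqrt (c ^ 2 - 4 * e)) / 2), ((c + sqrt (c ^ 2 - 4 * e)) / 2).
      pose proof (sqrt_sqrt _ H); split; [| split]; nra.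
    + assert (He : 0 < e) by nra.
      pose proof (sqrt_sqrt _ (Rlt_le _ _ He)); pose proof (sqrt_pos e).
      assert (Hp : 0 <= 2 * sqrt e - c) by nra.
      pose proof (sqrt_sqrt _ Hp).
      exists (sqrt (2 * sqrt e - c)), (sqrt e), (sqrt e); split; [| split]; nra.
  - set (f := fun X => X * (c + X) ^ 2 - d ^ 2 - 4 * e * X).
    set (M := 1 + Rabs c + Rabs d + 4 * Rabs e).
    pose proof (Rabs_pos c); pose proof (Rabs_pos d); pose proof (Rabs_pos e).
    assert (Hf : continuity f) by (unfold f; reg).
    assert (HM : 0 < M) by (unfold M; lra).
    assert (f0 : f 0 < 0) by (unfold f; nra).
    assert (fM : 0 < f M).
    { unfold f.
      pose proof (Rle_abs c); pose proof (Rle_abs (- c)); pose proof (Rle_abs e).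
      rewrite Rabs_Ropp in *.
      assert (Ed : d ^ 2 = Rabs d * Rabs d)
        by (rewrite <- Rabs_mult, Rabs_pos_eq; [ring | nra]).
      assert (h1 : 1 + Rabs d + 4 * Rabs e <= c + M) by (unfold M; lra).
      assert (h2 : 1 + Rabs d + 4 * Rabs e <= (c + M) ^ 2) by nra.
      assert (h3 : M * (1 + Rabs d + 4 * Rabs e) <= M * (c + M) ^ 2)
        by (apply Rmult_le_compat_l; lra).
      assert (h4 : Rabs d * Rabs d <= M * Rabs d)
        by (apply Rmult_le_compat_r; unfold M; lra).
      assert (h5 : e * M <= Rabs e * M) by (apply Rmult_le_compat_r; lra).
      unfold M in *; nra. }
    destruct (IVT f 0 M Hf HM f0 fM) as [X [[HX0 _] HX]]; unfold f in HX.
    assert (HXpos : 0 < X).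
    { destruct HX0 as [h | h]; auto. subst X. exfalso; apply Hd; nra. }
    pose proof (sqrt_sqrt _ (Rlt_le _ _ HXpos)) as Hs.
    pose proof (sqrt_lt_R0 _ HXpos).
    exists (sqrt X), ((c + X - d / sqrt X) / 2), ((c + X + d / sqrt X) / 2).
    split; [| split].
    + simpl; nra.
    + field; lra.
    + assert (E : (c + X - d / sqrt X) / 2 * ((c + X + d / sqrt X) / 2)
                  = ((c + X) ^ 2 - d ^ 2 / X) / 4).
      { replace (d ^ 2 / X) with (d ^ 2 / (sqrt X * sqrt X)) by now rewrite Hs.
        field; lra. }
      rewrite E; apply (Rmult_eq_reg_l (4 * X)); [| lra].
      field_simplify; [nra | lra].
Qed.

(* Shift X := X - a3/4 to reduce to the depressed case. *)
Lemma monic_quartic_factor (a0 a1 a2 a3 : R) :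
  exists p q r s, [a0; a1; a2; a3; 1] = quad_prod p q r s.
Proof.
  set (h := a3 / 4).
  destruct (depressed_quartic_factor (a2 - 3 * a3 ^ 2 / 8)
              (a1 - a2 * a3 / 2 + a3 ^ 3 / 8)
              (a0 - a1 * a3 / 4 + a2 * a3 ^ 2 / 16 - 3 * a3 ^ 4 / 256))
    as [P [Q [S [H1 [H2 H3]]]]].
  exists (2 * h + P), (h ^ 2 + P * h + Q), (2 * h - P), (h ^ 2 - P * h + S).
  unfold quad_prod; f_equal; [| f_equal; [| f_equal; [| f_equal]]].
  - replace ((h ^ 2 + P * h + Q) * (h ^ 2 - P * h + S))
      with (h ^ 4 + h ^ 2 * (Q + S - P ^ 2) + h * (P * (S - Q)) + Q * S) by ring.
    rewrite H1, H2, H3; unfold h; field.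
  - replace ((2 * h + P) * (h ^ 2 - P * h + S) + (h ^ 2 + P * h + Q) * (2 * h - P))
      with (4 * h ^ 3 + 2 * h * (Q + S - P ^ 2) + P * (S - Q)) by ring.
    rewrite H1, H2; unfold h; field.
  - replace (h ^ 2 + P * h + Q + (h ^ 2 - P * h + S) + (2 * h + P) * (2 * h - P))
      with (6 * h ^ 2 + (Q + S - P ^ 2)) by ring.
    rewrite H1; unfold h; field.
  - unfold h; field.
Qed.

Lemma quad_prod_stable_iff (p q r s : R) :
  all_roots_stable (quad_prod p q r s) <-> 0 < p /\ 0 < q /\ 0 < r /\ 0 < s.
Proof.
  unfold all_roots_stable; split.
  - intro H.
    assert (Hpq : 0 < p /\ 0 < q).
    { destruct (Rlt_dec 0 p), (Rlt_dec 0 q); try (split; assumption);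
        destruct (quadC_root_re_ge0 p q) as [z [Hz Hre]]; try lra;
        specialize (H z (quad_prod_root p q r s z (or_introl Hz))); lra. }
    assert (Hrs : 0 < r /\ 0 < s).
    { destruct (Rlt_dec 0 r), (Rlt_dec 0 s); try (split; assumption);
        destruct (quadC_root_re_ge0 r s) as [z [Hz Hre]]; try lra;
        specialize (H z (quad_prod_root p q r s z (or_intror Hz))); lra. }
    tauto.
  - intros [Hp [Hq [Hr Hs]]] z Hz.
    rewrite peval_quad_prod in Hz.
    destruct (Cmul_eq0 _ _ Hz) as [Hz' | Hz'].
    + exact (quadC_root_re_lt0 p q z Hp Hq Hz').
    + exact (quadC_root_re_lt0 r s z Hr Hs Hz').
Qed.

Lemma quartic_stable_iff_hurwitz (a0 a1 a2 a3 : R) :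
  0 < a0 -> 0 < a1 -> 0 < a3 ->
  all_roots_stable [a0; a1; a2; a3; 1] <-> a1 ^ 2 + a3 ^ 2 * a0 < a1 * a2 * a3.
Proof.
  intros Ha0 Ha1 Ha3.
  destruct (monic_quartic_factor a0 a1 a2 a3) as [p [q [r [s E]]]].
  rewrite E, quad_prod_stable_iff.
  injection E as E0 E1 E2 E3.
  assert (Hurwitz : a1 * a2 * a3 - a1 ^ 2 - a3 ^ 2 * a0
                    = p * r * ((q - s) ^ 2 + (p + r) * (p * s + q * r)))
    by (subst; ring).
  assert (0 <= (q - s) ^ 2) by apply pow2_ge_0.
  split.
  - intros [Hp [Hq [Hr Hs]]].
    assert (0 < (p + r) * (p * s + q * r)) by (apply Rmult_lt_0_compat; nra).
    assert (0 < p * r) by nra.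
    assert (0 < p * r * ((q - s) ^ 2 + (p + r) * (p * s + q * r)))
      by (apply Rmult_lt_0_compat; lra).
    lra.
  - intro Hstab.
    assert (0 < (q - s) ^ 2 + (p + r) * (p * s + q * r)).
    { rewrite <- E3, <- E1. assert (0 < a3 * a1) by nra. lra. }
    assert (Hpr : 0 < p * r) by nra.
    assert (0 < p /\ 0 < r) as [Hp Hr] by (split; nra).
    assert (0 < q /\ 0 < s) as [Hq Hs] by (split; nra).
    tauto.
Qed.

Lemma charpoly_coeffs eps d11 d12 d22 k11 k22 nu :
  charpoly eps (mkM d11 d12 d12 d22) (Kmat k11 k22) nu =
  [k11 * k22 + nu ^ 2; eps * (d11 * k22 + d22 * k11);
   k11 + k22 + eps ^ 2 * (d11 * d22 - d12 ^ 2); eps * (d11 + d22); 1].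
Proof.
  unfold charpoly, det_quad, psub, Madd, Mscale, Kmat, Nmat, I2, qentry; simpl.
  f_equal; [| f_equal; [| f_equal; [| f_equal; [| f_equal]]]]; ring.
Qed.

Lemma charpoly_undamped d11 d12 d22 k11 k22 nu :
  charpoly 0 (mkM d11 d12 d12 d22) (Kmat k11 k22) nu =
  [k11 * k22 + nu ^ 2; 0; k11 + k22; 0; 1].
Proof.
  rewrite charpoly_coeffs.
  f_equal; f_equal; [ring | f_equal; [ring | f_equal; ring]].
Qed.

Definition stab_bound eps d11 d12 d22 k11 k22 :=
  (k11 - k22) ^ 2 * d11 * d22 / (d11 + d22) ^ 2
  + eps ^ 2 * (d11 * d22 - d12 ^ 2) * (d11 * k22 + d22 * k11) / (d11 + d22).

Section Damped.

Variables eps d11 d12 d22 k11 k22 : R.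
Hypotheses (Heps : 0 < eps) (Hk11 : 0 < k11) (Hk22 : 0 < k22)
  (Hd11 : 0 < d11) (Hd22 : 0 < d22) (HdetD : 0 < d11 * d22 - d12 ^ 2).

Let B := stab_bound eps d11 d12 d22 k11 k22.
Let D := mkM d11 d12 d12 d22.
Let K := Kmat k11 k22.

Lemma charpoly_stable_iff nu :
  all_roots_stable (charpoly eps D K nu) <-> nu ^ 2 < B.
Proof.
  unfold D, K; rewrite charpoly_coeffs, quartic_stable_iff_hurwitz;
    [| nra | apply Rmult_lt_0_compat; nra | apply Rmult_lt_0_compat; lra].
  assert (Hscale : 0 < (eps * (d11 + d22)) ^ 2) by (apply pow_lt, Rmult_lt_0_compat; lra).
  assert (Hurwitz :
    eps * (d11 * k22 + d22 * k11) * (k11 + k22 + eps ^ 2 * (d11 * d22 - d12 ^ 2))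
      * (eps * (d11 + d22))
    - (eps * (d11 * k22 + d22 * k11)) ^ 2
    - (eps * (d11 + d22)) ^ 2 * (k11 * k22 + nu ^ 2)
    = (eps * (d11 + d22)) ^ 2 * (B - nu ^ 2))
    by (unfold B, stab_bound; field; lra).
  split; intro Hstab; nra.
Qed.

Lemma stab_bound_pos : 0 < B.
Proof.
  unfold B, stab_bound.
  assert (0 <= (k11 - k22) ^ 2 * d11 * d22 / (d11 + d22) ^ 2).
  { apply Rmult_le_pos; [| apply Rlt_le, Rinv_0_lt_compat, pow_lt; lra].
    pose proof (pow2_ge_0 (k11 - k22)); apply Rmult_le_pos; nra. }
  assert (0 < eps ^ 2 * (d11 * d22 - d12 ^ 2) * (d11 * k22 + d22 * k11) / (d11 + d22)).
  { apply Rmult_lt_0_compat; [| apply Rinv_0_lt_compat; lra].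
    pose proof (pow_lt eps 2 Heps); apply Rmult_lt_0_compat; nra. }
  lra.
Qed.

Lemma stab_set_iff s : stab_set eps D K s <-> 0 <= s < B.
Proof.
  split.
  - intros [nu [-> Hnu]]; rewrite charpoly_stable_iff in Hnu.
    split; [apply pow2_ge_0 | exact Hnu].
  - intros [Hs0 HsB]; exists (sqrt s).
    assert (Hsq : sqrt s ^ 2 = s) by (simpl; rewrite Rmult_1_r; apply sqrt_sqrt; lra).
    split; [now rewrite Hsq | now rewrite charpoly_stable_iff, Hsq].
Qed.

End Damped.

Lemma is_lub_interval (E : R -> Prop) (b : R) :
  0 < b -> (forall s, E s <-> 0 <= s < b) -> is_lub E b.
Proof.
  intros Hb HE; split.
  - intros s Hs; apply HE in Hs; lra.
  - intros u Hu.
    destruct (Rle_dec b u) as [h | h]; auto.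
    set (m := Rmax 0 u).
    assert (0 <= m /\ u <= m) as [Hm0 Hum] by (split; [apply Rmax_l | apply Rmax_r]).
    assert (m < b) by (unfold m; apply Rmax_lub_lt; lra).
    assert (E ((m + b) / 2)) by (apply HE; lra).
    assert ((m + b) / 2 <= u) by now apply Hu.
    lra.
Qed.

Lemma sqr_mul_small (c delta : R) : 0 <= c -> 0 < delta ->
  exists eta, 0 < eta /\ forall eps, 0 < eps -> eps < eta -> eps ^ 2 * c < delta.
Proof.
  intros Hc Hdelta.
  exists (Rmin 1 (delta / (c + 1))).
  assert (Hq : 0 < delta / (c + 1)) by (apply Rdiv_lt_0_compat; lra).
  split; [apply Rmin_glb_lt; lra |].
  intros eps Heps Heta.
  assert (Heps1 : eps < 1) by (eapply Rlt_le_trans; [exact Heta | apply Rmin_l]).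
  assert (Hlin : eps * (c + 1) < delta).
  { apply (Rmult_lt_reg_r (/ (c + 1))); [apply Rinv_0_lt_compat; lra |].
    rewrite Rmult_assoc, Rinv_r, Rmult_1_r by lra.
    eapply Rlt_le_trans; [exact Heta | apply Rmin_r]. }
  assert (eps ^ 2 * c <= eps * c) by (apply Rmult_le_compat_r; nra).
  nra.
Qed.

Lemma peval_biquadratic S P x y : peval [P; 0; S; 0; 1] (mkC x y) =
  mkC ((x * x - y * y) ^ 2 - (2 * x * y) ^ 2 + S * (x * x - y * y) + P)
      (2 * (x * x - y * y) * (2 * x * y) + S * (2 * x * y)).
Proof. unfold peval, Cmul, Cadd, Cofr, C0; simpl; f_equal; ring. Qed.

Lemma peval_pderiv_biquadratic S P x y :
  peval (pderiv [P; 0; S; 0; 1]) (mkC x y) =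
  mkC (2 * S * x + 4 * (x ^ 3 - 3 * x * y ^ 2)) (2 * S * y + 4 * (3 * x ^ 2 * y - y ^ 3)).
Proof. unfold pderiv, pderiv_aux, peval, Cmul, Cadd, Cofr, C0; simpl; f_equal; ring. Qed.

Definition simple_imaginary_roots (p : Defs.poly) : Prop :=
  forall z, peval p z = C0 -> re z = 0 /\ peval (pderiv p) z <> C0.

Section Biquadratic.

Variables S P : R.
Hypotheses (HS : 0 < S) (HP : 0 < P).

(* For z^2 = u + i v the equation reads (u^2 - v^2 + S u + P) + i v (2u + S) = 0;
   v = 0 forces z to be real or imaginary, and v <> 0 forces u = -S/2,
   which is impossible when S^2 > 4P. *)
Lemma biquadratic_simple_imaginary :
  4 * P < S ^ 2 -> simple_imaginary_roots [P; 0; S; 0; 1].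
Proof.
  intros Hdisc [x y] Hz; rewrite peval_biquadratic in Hz; unfold C0 in Hz.
  injection Hz as H1 H2.
  set (u := x * x - y * y) in *; set (v := 2 * x * y) in *.
  assert (Ev : v * (2 * u + S) = 0) by lra.
  apply Rmult_integral in Ev; destruct Ev as [Ev | Ev].
  - rewrite Ev in H1.
    assert (Hx : x = 0).
    { unfold v in Ev; destruct (Req_dec x 0) as [hx | hx]; auto.
      assert (y = 0) by (apply (Rmult_eq_reg_l (2 * x)); nra).
      subst y; exfalso; unfold u in H1; nra. }
    subst x; split; [reflexivity |].
    rewrite peval_pderiv_biquadratic; unfold C0; intro Hd; injection Hd as _ Hd.
    unfold u in H1.
    assert (y <> 0) by (intro; subst y; nra).
    assert (E : 2 * y * (S - 2 * y ^ 2) = 0) by nra.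
    apply Rmult_integral in E; destruct E as [E | E]; [lra | nra].
  - exfalso; assert (u = - S / 2) by lra; subst u; nra.
Qed.

(* If S^2 = 4P, i sqrt(S/2) is a double root; if S^2 < 4P, the factorization
   (X^2 + pX + q)(X^2 - pX + s) has p <> 0 and one factor has a root with
   positive real part. *)
Lemma biquadratic_disc_pos :
  simple_imaginary_roots [P; 0; S; 0; 1] -> 4 * P < S ^ 2.
Proof.
  intro H; destruct (Rlt_dec (4 * P) (S ^ 2)) as [h | h]; auto; exfalso.
  destruct (Req_dec (S ^ 2) (4 * P)) as [h0 | h0].
  - assert (0 <= S / 2) by lra.
    pose proof (sqrt_sqrt (S / 2) ltac:(lra)).
    set (y := sqrt (S / 2)) in *; clearbody y.
    destruct (H (mkC 0 y)) as [_ Hd].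
    + rewrite peval_biquadratic; unfold C0; f_equal; nra.
    + apply Hd; rewrite peval_pderiv_biquadratic; unfold C0; f_equal; nra.
  - destruct (monic_quartic_factor P 0 S 0) as [p [q [r [s E]]]].
    pose proof E as E'; injection E' as E0 E1 E2 E3.
    destruct (Req_dec p 0) as [hp | hp].
    + assert (r = 0) by lra; subst p r.
      pose proof (pow2_ge_0 (q - s)); nra.
    + assert (p < 0 \/ r < 0) as [hneg | hneg] by lra.
      * destruct (quadC_root_re_ge0 p q) as [z [Hz [_ Hre]]]; [lra |].
        destruct (H z) as [Hz0 _]; [rewrite E; apply quad_prod_root; now left |].
        specialize (Hre hneg); lra.
      * destruct (quadC_root_re_ge0 r s) as [z [Hz [_ Hre]]]; [lra |].
        destruct (H z) as [Hz0 _]; [rewrite E; apply quad_prod_root; now right |].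
        specialize (Hre hneg); lra.
Qed.

End Biquadratic.

Lemma sym_pos_def_minors d11 d12 d22 : sym_pos_def (mkM d11 d12 d12 d22) ->
  0 < d11 /\ 0 < d22 /\ 0 < d11 * d22 - d12 ^ 2.
Proof.
  intros [_ H]; simpl in H.
  pose proof (H 1 0 ltac:(left; lra)); pose proof (H 0 1 ltac:(right; lra)).
  pose proof (H d12 (- d11) ltac:(right; lra)).
  repeat split; nra.
Qed.

Theorem mainTheorem5 (k11 k22 d11 d12 d22 : R)
  (hk11 : 0 < k11) (hk22 : 0 < k22)
  (hD : sym_pos_def (mkM d11 d12 d12 d22)) :
  let K := Kmat k11 k22 in
  let D := mkM d11 d12 d12 d22 in
  let nu0sq := (k11 - k22) ^ 2 / 4 in
  let nucrsq := (k11 - k22) ^ 2 / 4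
                - (d11 - d22) ^ 2 * (k11 - k22) ^ 2 / (4 * (d11 + d22) ^ 2) in
  ((forall eps : R, 0 < eps -> exists s : R, is_lub (stab_set eps D K) s) /\
   (forall delta : R, 0 < delta -> exists eta : R, 0 < eta /\
      forall eps s : R, 0 < eps -> eps < eta -> is_lub (stab_set eps D K) s ->
        Rabs (s - nucrsq) < delta)) /\
  (nu0sq = (tr2 K / 2) ^ 2 - det2 K /\
   forall nu : R,
     ((forall z : Cplx, peval (charpoly 0 D K nu) z = C0 ->
         re z = 0 /\ peval (pderiv (charpoly 0 D K nu)) z <> C0)
      <-> nu ^ 2 < nu0sq)) /\
  (nu0sq - nucrsq =
     ((2 * tr2 (Mmul K D) - tr2 K * tr2 D) / (2 * tr2 D)) ^ 2 /\
   0 <= nu0sq - nucrsq).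
Proof.
  intros K D nu0sq nucrsq; subst K D nu0sq nucrsq.
  destruct (sym_pos_def_minors _ _ _ hD) as [Hd11 [Hd22 HdetD]].
  assert (lub_bound : forall eps, 0 < eps ->
    is_lub (stab_set eps (mkM d11 d12 d12 d22) (Kmat k11 k22))
           (stab_bound eps d11 d12 d22 k11 k22))
    by (intros; apply is_lub_interval; [apply stab_bound_pos | apply stab_set_iff]; auto).
  set (c := (d11 * d22 - d12 ^ 2) * (d11 * k22 + d22 * k11) / (d11 + d22)).
  assert (Hc : 0 <= c)
    by (unfold c, Rdiv; apply Rmult_le_pos; [apply Rmult_le_pos; nra | apply Rlt_le, Rinv_0_lt_compat; lra]).
  split; [split | split; [split |]].
  - intros eps Heps; eexists; now apply lub_bound.
  - intros delta Hdelta.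
    destruct (sqr_mul_small c delta Hc Hdelta) as [eta [Heta Hsmall]].
    exists eta; split; [exact Heta |].
    intros eps s Heps Hlt Hs.
    rewrite (is_lub_u _ _ _ Hs (lub_bound eps Heps)).
    replace (stab_bound eps d11 d12 d22 k11 k22 - _) with (eps ^ 2 * c)
      by (unfold stab_bound, c; field; lra).
    rewrite Rabs_pos_eq by (apply Rmult_le_pos; [apply pow2_ge_0 | exact Hc]).
    auto.
  - unfold tr2, det2, Kmat; simpl; field.
  - intro nu.
    rewrite charpoly_undamped.
    split; intro H.
    + apply biquadratic_disc_pos in H; nra.
    + apply biquadratic_simple_imaginary; nra.
  - assert (E : (k11 - k22) ^ 2 / 4 - ((k11 - k22) ^ 2 / 4
                - (d11 - d22) ^ 2 * (k11 - k22) ^ 2 / (4 * (d11 + d22) ^ 2))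
                = ((2 * tr2 (Mmul (Kmat k11 k22) (mkM d11 d12 d12 d22))
                    - tr2 (Kmat k11 k22) * tr2 (mkM d11 d12 d12 d22))
                   / (2 * tr2 (mkM d11 d12 d12 d22))) ^ 2)
      by (unfold tr2, Mmul, Kmat; simpl; field; lra).
    split; [exact E | rewrite E; apply pow2_ge_0].
Qed.
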